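(* Let $Z=Z(t)$ be the unique formal power series in $t$ with $Z(0)=0$ and $Z=t(1+Z)^4/(1+Z^2)$, and let $\mu=\mu(t,u)$ be the unique formal power series in $t$ satisfying $$\mu=(u-1)\frac{(1+Z^2)(1+\mu Z)(1+\mu Z^2)(1+\mu Z^3)}{(1+Z)(1+Z+Z^2)(1-Z)^3(1-\mu Z^2)}.$$ Write $v=\frac{(u-1)Z(1+Z^2)}{(1+Z)(1+Z+Z^2)(1-Z)^3}$. Then $$\mu(t,u)=\frac{1}{Z^2}\left(\frac{2}{1+v(1-Z)^2/3+\frac23\sqrt{3+v^2(1-Z)^4}\,\cos(\phi/3)}-1\right),$$ where $\phi=\arccos\left(\dfrac{-9v(1+4Z+Z^2)+v^3(1-Z)^6}{(3+v^2(1-Z)^4)^{3/2}}\right)$. *)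

From Stdlib Require Import Reals.
From Coquelicot Require Import Coquelicot.
Open Scope R_scope.

Definition fps := nat -> R.

Definition fconst (c : R) : fps := fun n => match n with O => c | _ => 0 end.
Definition fX : fps := fun n => match n with 1%nat => 1 | _ => 0 end.
Definition fadd (a b : fps) : fps := fun n => a n + b n.
Definition fsub (a b : fps) : fps := fun n => a n - b n.
Definition fmul (a b : fps) : fps :=
  fun n => sum_f_R0 (fun k => a k * b (n - k)%nat) n.
Fixpoint fpow (a : fps) (k : nat) : fps :=
  match k with O => fconst 1 | S k' => fmul a (fpow a k') end.

(* Z = t (1+Z)^4 / (1+Z^2), with denominators cleared (1+Z^2 is invertible) *)
Definition Z_eqn (z : fps) : Prop :=
  z 0%nat = 0 /\
  fmul z (fadd (fconst 1) (fpow z 2)) = fmul fX (fpow (fadd (fconst 1) z) 4).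

(* mu = (u-1)(1+Z^2)(1+mu Z)(1+mu Z^2)(1+mu Z^3)
        / ((1+Z)(1+Z+Z^2)(1-Z)^3(1-mu Z^2)),
   with the (invertible: constant term 1) denominator cleared. *)
Definition mu_eqn (u : R) (z m : fps) : Prop :=
  let one := fconst 1 in
  fmul m (fmul (fadd one z)
          (fmul (fadd (fadd one z) (fpow z 2))
          (fmul (fpow (fsub one z) 3)
                (fsub one (fmul m (fpow z 2))))))
  = fmul (fconst (u - 1))
         (fmul (fadd one (fpow z 2))
         (fmul (fadd one (fmul m z))
         (fmul (fadd one (fmul m (fpow z 2)))
               (fadd one (fmul m (fpow z 3)))))).

Definition v_of (u Z : R) : R :=
  (u - 1) * Z * (1 + Z ^ 2) / ((1 + Z) * (1 + Z + Z ^ 2) * (1 - Z) ^ 3).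

Definition phi_of (u Z : R) : R :=
  let v := v_of u Z in
  acos ((- 9 * v * (1 + 4 * Z + Z ^ 2) + v ^ 3 * (1 - Z) ^ 6)
        / Rpower (3 + v ^ 2 * (1 - Z) ^ 4) (3 / 2)).

Definition mu_closed (u Z : R) : R :=
  let v := v_of u Z in
  1 / Z ^ 2 *
  (2 / (1 + v * (1 - Z) ^ 2 / 3
          + 2 / 3 * sqrt (3 + v ^ 2 * (1 - Z) ^ 4) * cos (phi_of u Z / 3))
   - 1).

From Stdlib Require Import Reals Lra Lia Psatz.
From Coquelicot Require Import Coquelicot.
Open Scope R_scope.

(* For r >= 0 the weighted norms sum_(n <= K) |a_n| r^n of formal power series
   are submultiplicative.  Both defining equations have the form a * b = c with
   b(0) = 1, which expresses a_(K+1) through coefficients of order <= K; estimating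
   this recursion gives norms <= 2r for Z and <= 2|u-1| + 1 for mu once r is small.
   Hence both series converge absolutely for |t| < r, evaluation is a ring
   morphism, and Z(t), mu(t) satisfy the defining equations as real numbers.
   With s = mu Z^2 and x = 2/(1+s) the equation for mu becomes a cubic in x.
   Viete's formula gives a root of its depressed form near 1, as is
   x - (1 + v(1-Z)^2/3); two distinct roots y1, y2 of y^3 - p y - q would satisfy
   y1^2 + y1 y2 + y2^2 = p, which is impossible for roots this large. *)

Lemma sum_f_R0_single f n j : (j <= n)%nat ->
  (forall i, (i <= n)%nat -> i <> j -> f i = 0) -> sum_f_R0 f n = f j.
Proof.
  induction n as [| n IHn]; intros Hj Hf.
  - now replace j with 0%nat by lia.
  - simpl. destruct (Nat.eq_dec j (S n)) as [-> | Hjn].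
    + rewrite sum_eq_R0 by (intros; apply Hf; lia). ring.
    + rewrite IHn, (Hf (S n)) by (lia || (intros; apply Hf; lia)). ring.
Qed.

Lemma fmul_0 a b : fmul a b 0%nat = a 0%nat * b 0%nat.
Proof. reflexivity. Qed.

Lemma fpow_0 a k : fpow a k 0%nat = a 0%nat ^ k.
Proof. induction k as [| k IHk]; simpl; [reflexivity | now rewrite fmul_0, IHk]. Qed.

Lemma fmul_fX_0 a : fmul fX a 0%nat = 0.
Proof. unfold fmul. simpl. ring. Qed.

Lemma fmul_fX_S a n : fmul fX a (S n) = a n.
Proof.
  unfold fmul. rewrite (sum_f_R0_single _ (S n) 1) by
    (lia || (intros [| [| i]] Hi Hi1; [simpl; ring | lia | simpl; ring])).
  simpl. rewrite Nat.sub_0_r. ring.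
Qed.

Definition fnonconst (a : fps) : fps := fun n => match n with O => 0 | S _ => a n end.

Lemma fmul_nonconst a b n : fmul a b n = a n * b 0%nat + fmul a (fnonconst b) n.
Proof.
  unfold fmul.
  transitivity (sum_f_R0 (fun k => (if Nat.eqb k n then a k * b 0%nat else 0)
                                   + a k * fnonconst b (n - k)%nat) n).
  { apply sum_eq. intros k Hk. unfold fnonconst. destruct (n - k)%nat eqn:E.
    - rewrite (proj2 (Nat.eqb_eq k n)) by lia. ring.
    - rewrite (proj2 (Nat.eqb_neq k n)) by lia. ring. }
  rewrite sum_plus, (sum_f_R0_single _ n n)
    by (lia || (intros i _ Hi; now rewrite (proj2 (Nat.eqb_neq i n)))).
  now rewrite Nat.eqb_refl.
Qed.

Lemma coef_of_fmul_eq a b c : b 0%nat = 1 -> fmul a b = c ->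
  forall n, a n = c n - fmul a (fnonconst b) n.
Proof. intros Hb Habc n. rewrite <- Habc, fmul_nonconst, Hb. ring. Qed.

Definition ftrunc (K : nat) (a : fps) : fps := fun n => if Nat.leb n K then a n else 0.

Section WeightedNorm.

Variable r : R.
Hypothesis r_ge0 : 0 <= r.

Definition wnorm (K : nat) (a : fps) : R := sum_f_R0 (fun n => Rabs (a n) * r ^ n) K.

Lemma wnorm_ext K a b : (forall n, (n <= K)%nat -> a n = b n) -> wnorm K a = wnorm K b.
Proof. intro Hab. apply sum_eq. intros n Hn. now rewrite Hab. Qed.

Lemma wnorm_S K a : wnorm (S K) a = wnorm K a + Rabs (a (S K)) * r ^ S K.
Proof. reflexivity. Qed.

Lemma wnorm_ge0 K a : 0 <= wnorm K a.
Proof.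
  apply cond_pos_sum. intro n. apply Rmult_le_pos; [apply Rabs_pos | now apply pow_le].
Qed.

Lemma coef_le_wnorm K a n : (n <= K)%nat -> Rabs (a n) * r ^ n <= wnorm K a.
Proof.
  induction K as [| K IHK]; intro Hn.
  - replace n with 0%nat by lia. unfold wnorm. simpl. lra.
  - rewrite wnorm_S. destruct (Nat.eq_dec n (S K)) as [-> | HnK].
    + pose proof (wnorm_ge0 K a). lra.
    + assert (0 <= Rabs (a (S K)) * r ^ S K)
        by (apply Rmult_le_pos; [apply Rabs_pos | now apply pow_le]).
      specialize (IHK ltac:(lia)). lra.
Qed.

Lemma wnorm_const K c : wnorm K (fconst c) = Rabs c.
Proof.
  induction K as [| K IHK]; [unfold wnorm; simpl; ring |].
  rewrite wnorm_S, IHK. simpl fconst. rewrite Rabs_R0. ring.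
Qed.

Lemma wnorm_fX_le K : wnorm K fX <= r.
Proof.
  induction K as [| [| K] IHK].
  - unfold wnorm. simpl. rewrite Rabs_R0. lra.
  - unfold wnorm. simpl. rewrite Rabs_R0, Rabs_R1. lra.
  - rewrite wnorm_S. simpl fX. rewrite Rabs_R0. lra.
Qed.

Lemma wnorm_fX_mul K a : wnorm (S K) (fmul fX a) = r * wnorm K a.
Proof.
  induction K as [| K IHK].
  - unfold wnorm. simpl. rewrite fmul_fX_0, fmul_fX_S, Rabs_R0. ring.
  - rewrite wnorm_S, IHK, wnorm_S, fmul_fX_S. simpl. ring.
Qed.

Lemma wnorm_nonconst K a : wnorm K (fnonconst a) = wnorm K a - Rabs (a 0%nat).
Proof.
  induction K as [| K IHK]; [unfold wnorm; simpl; rewrite Rabs_R0; ring |].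
  rewrite !wnorm_S, IHK. simpl. ring.
Qed.

Lemma wnorm_trunc K a : wnorm (S K) (ftrunc K a) = wnorm K a.
Proof.
  rewrite wnorm_S. unfold ftrunc at 2. rewrite (proj2 (Nat.leb_gt (S K) K)) by lia.
  rewrite Rabs_R0, Rmult_0_l, Rplus_0_r. apply wnorm_ext. intros n Hn. unfold ftrunc.
  now rewrite (proj2 (Nat.leb_le n K)).
Qed.

Lemma wnorm_add_le K a b A B : wnorm K a <= A -> wnorm K b <= B ->
  wnorm K (fadd a b) <= A + B.
Proof.
  intros Ha Hb. apply Rle_trans with (wnorm K a + wnorm K b); [| lra].
  unfold wnorm. rewrite <- plus_sum. apply sum_Rle. intros n _. unfold fadd.
  pose proof (Rabs_triang (a n) (b n)). pose proof (pow_le r n r_ge0). nra.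
Qed.

Lemma wnorm_sub_le K a b A B : wnorm K a <= A -> wnorm K b <= B ->
  wnorm K (fsub a b) <= A + B.
Proof.
  intros Ha Hb. apply Rle_trans with (wnorm K a + wnorm K b); [| lra].
  unfold wnorm. rewrite <- plus_sum. apply sum_Rle. intros n _. unfold fsub.
  pose proof (Rabs_triang (a n) (- b n)) as Htri. rewrite Rabs_Ropp in Htri.
  pose proof (pow_le r n r_ge0). unfold Rminus. nra.
Qed.

Lemma wnorm_one_add_le K a A : wnorm K a <= A -> wnorm K (fadd (fconst 1) a) <= 1 + A.
Proof. apply wnorm_add_le. rewrite wnorm_const, Rabs_R1. lra. Qed.

Lemma wnorm_one_sub_le K a A : wnorm K a <= A -> wnorm K (fsub (fconst 1) a) <= 1 + A.
Proof. apply wnorm_sub_le. rewrite wnorm_const, Rabs_R1. lra. Qed.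

(* cauchy_finite splits the product of the truncated sums into the truncated
   Cauchy product plus a nonnegative remainder. *)
Lemma wnorm_mul K a b : wnorm K (fmul a b) <= wnorm K a * wnorm K b.
Proof.
  set (A := fun n => Rabs (a n) * r ^ n). set (B := fun n => Rabs (b n) * r ^ n).
  apply Rle_trans with (sum_f_R0 (fun n => sum_f_R0 (fun k => A k * B (n - k)%nat) n) K).
  { apply sum_Rle. intros n _. unfold fmul.
    eapply Rle_trans; [apply Rmult_le_compat_r; [now apply pow_le | apply Rsum_abs] |].
    rewrite Rmult_comm, scal_sum. apply Req_le, sum_eq. intros k Hk.
    unfold A, B. rewrite Rabs_mult.
    replace (r ^ n) with (r ^ k * r ^ (n - k)) by (rewrite <- pow_add; f_equal; lia).
    ring. }
  destruct K as [| K]; [unfold wnorm, A, B; simpl; lra |].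
  unfold wnorm. fold A B. rewrite (cauchy_finite A B (S K)) by lia.
  match goal with |- _ <= _ + ?rest => assert (0 <= rest) end.
  { apply cond_pos_sum. intro k. apply cond_pos_sum. intro l. unfold A, B.
    apply Rmult_le_pos; apply Rmult_le_pos; try apply Rabs_pos; now apply pow_le. }
  lra.
Qed.

Lemma wnorm_mul_le K a b A B : wnorm K a <= A -> wnorm K b <= B ->
  wnorm K (fmul a b) <= A * B.
Proof.
  intros Ha Hb. eapply Rle_trans; [apply wnorm_mul |].
  apply Rmult_le_compat; auto; apply wnorm_ge0.
Qed.

Lemma wnorm_pow_le K a k A : wnorm K a <= A -> wnorm K (fpow a k) <= A ^ k.
Proof.
  intro Ha. induction k as [| k IHk]; simpl.
  - rewrite wnorm_const, Rabs_R1. lra.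
  - now apply wnorm_mul_le.
Qed.

(* When b has no constant term, coefficient S K of a * b only involves a up to K. *)
Lemma wnorm_mul_S_l K a b : b 0%nat = 0 ->
  wnorm (S K) (fmul a b) <= wnorm K a * wnorm (S K) b.
Proof.
  intro Hb. rewrite <- (wnorm_trunc K a), (wnorm_ext (S K) (fmul a b) (fmul (ftrunc K a) b)).
  - apply wnorm_mul.
  - intros n Hn. apply sum_eq. intros k Hk. unfold ftrunc.
    destruct (Nat.leb k K) eqn:E; [reflexivity |].
    apply Nat.leb_gt in E. replace (n - k)%nat with 0%nat by lia. rewrite Hb. ring.
Qed.

Lemma wnorm_mul_S K a b : a 0%nat = 0 -> b 0%nat = 0 ->
  wnorm (S K) (fmul a b) <= wnorm K a * wnorm K b.
Proof.
  intros Ha Hb. rewrite <- (wnorm_trunc K a), <- (wnorm_trunc K b),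
    (wnorm_ext (S K) (fmul a b) (fmul (ftrunc K a) (ftrunc K b))).
  - apply wnorm_mul.
  - intros n Hn. apply sum_eq. intros k Hk. unfold ftrunc.
    destruct (Nat.leb k K) eqn:E.
    + destruct (Nat.leb (n - k) K) eqn:E2; [reflexivity |].
      apply Nat.leb_gt in E2. replace k with 0%nat by lia. rewrite Ha. ring.
    + apply Nat.leb_gt in E. replace (n - k)%nat with 0%nat by lia. rewrite Hb. ring.
Qed.

Lemma wnorm_S_of_fmul_eq K a b c : b 0%nat = 1 -> fmul a b = c ->
  wnorm (S K) a <= wnorm (S K) c + wnorm (S K) (fmul a (fnonconst b)).
Proof.
  intros Hb Habc.
  rewrite (wnorm_ext (S K) a (fsub c (fmul a (fnonconst b))))
    by (intros; now apply coef_of_fmul_eq).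
  apply wnorm_sub_le; apply Rle_refl.
Qed.

Definition wbounded (a : fps) : Prop := exists C, forall K, wnorm K a <= C.

Lemma wbounded_const c : wbounded (fconst c).
Proof. exists (Rabs c). intro K. rewrite wnorm_const. lra. Qed.

Lemma wbounded_fX : wbounded fX.
Proof. exists r. intro K. now apply wnorm_fX_le. Qed.

Lemma wbounded_add a b : wbounded a -> wbounded b -> wbounded (fadd a b).
Proof. intros [A HA] [B HB]. exists (A + B). intro K. now apply wnorm_add_le. Qed.

Lemma wbounded_sub a b : wbounded a -> wbounded b -> wbounded (fsub a b).
Proof. intros [A HA] [B HB]. exists (A + B). intro K. now apply wnorm_sub_le. Qed.

Lemma wbounded_mul a b : wbounded a -> wbounded b -> wbounded (fmul a b).
Proof. intros [A HA] [B HB]. exists (A * B). intro K. now apply wnorm_mul_le. Qed.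

Lemma wbounded_pow a k : wbounded a -> wbounded (fpow a k).
Proof. intros [A HA]. exists (A ^ k). intro K. now apply wnorm_pow_le. Qed.

End WeightedNorm.

Definition feval (t : R) (a : fps) : R := Series (fun n => a n * t ^ n).

Section Evaluation.

Variables r t : R.
Hypothesis t_lt_r : Rabs t < r.

Let r_ge0 : 0 <= r.
Proof. pose proof (Rabs_pos t). lra. Qed.

Lemma ex_series_Rabs_feval a : wbounded r a -> ex_series (fun n => Rabs (a n * t ^ n)).
Proof.
  intros [C HC]. set (q := Rabs t / r).
  assert (Hr : 0 < r) by (pose proof (Rabs_pos t); lra).
  assert (Hq : 0 <= q < 1).
  { unfold q. split.
    - apply Rmult_le_pos; [apply Rabs_pos | left; now apply Rinv_0_lt_compat].
    - apply Rmult_lt_reg_r with r; [lra |]. field_simplify; lra. }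
  apply (@ex_series_le R_AbsRing R_CompleteNormedModule _ (fun n => C * q ^ n)).
  - intro n. unfold norm; simpl. unfold abs; simpl.
    rewrite Rabs_Rabsolu, Rabs_mult, <- RPow_abs.
    replace (Rabs t ^ n) with (r ^ n * q ^ n)
      by (unfold q; rewrite <- Rpow_mult_distr; f_equal; field; lra).
    pose proof (coef_le_wnorm r r_ge0 n a n (le_n n)). specialize (HC n).
    pose proof (pow_le q n (proj1 Hq)). nra.
  - apply (ex_series_scal_l C (fun n => q ^ n)), ex_series_geom. rewrite Rabs_pos_eq; lra.
Qed.

Lemma is_series_feval a : wbounded r a -> is_series (fun n => a n * t ^ n) (feval t a).
Proof. intro Ha. apply Series_correct, ex_series_Rabs, ex_series_Rabs_feval, Ha. Qed.

Lemma Rabs_feval_le a C : (forall K, wnorm r K a <= C) -> Rabs (feval t a) <= C.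
Proof.
  intro HC. assert (Ha : wbounded r a) by now exists C.
  pose proof (is_series_feval a Ha) as Hs. apply is_series_Reals, cv_cvabs in Hs.
  refine (@Rle_cv_lim _ (fun _ => C) _ _ _ Hs _).
  - intro n. eapply Rle_trans; [apply Rsum_abs | eapply Rle_trans; [| apply (HC n)]].
    apply sum_Rle. intros i _. rewrite Rabs_mult, <- RPow_abs.
    apply Rmult_le_compat_l; [apply Rabs_pos |]. apply pow_incr. split; [apply Rabs_pos | lra].
  - intros eps Heps. exists 0%nat. intros. unfold R_dist. rewrite Rminus_eq_0, Rabs_R0. lra.
Qed.

Lemma feval_const c : feval t (fconst c) = c.
Proof.
  apply is_series_unique, is_series_Reals. intros eps Heps. exists 0%nat. intros n _.
  unfold R_dist.
  rewrite (sum_f_R0_single _ n 0) by (lia || (intros [|i] _ Hi; [lia | simpl; ring])).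
  simpl. rewrite Rmult_1_r, Rminus_eq_0, Rabs_R0. lra.
Qed.

Lemma feval_fX : feval t fX = t.
Proof.
  apply is_series_unique, is_series_Reals. intros eps Heps. exists 1%nat. intros n Hn.
  unfold R_dist. rewrite (sum_f_R0_single _ n 1)
    by (lia || (intros [| [| i]] _ Hi; [simpl; ring | lia | simpl; ring])).
  simpl. rewrite Rmult_1_r, Rmult_1_l, Rminus_eq_0, Rabs_R0. lra.
Qed.

Lemma feval_add a b : wbounded r a -> wbounded r b -> feval t (fadd a b) = feval t a + feval t b.
Proof.
  intros Ha Hb. apply is_series_unique.
  eapply is_series_ext;
    [| exact (is_series_plus _ _ _ _ (is_series_feval a Ha) (is_series_feval b Hb))].
  intro n. unfold fadd. simpl. unfold plus; simpl. ring.
Qed.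

Lemma feval_sub a b : wbounded r a -> wbounded r b -> feval t (fsub a b) = feval t a - feval t b.
Proof.
  intros Ha Hb. apply is_series_unique.
  eapply is_series_ext;
    [| exact (is_series_minus _ _ _ _ (is_series_feval a Ha) (is_series_feval b Hb))].
  intro n. unfold fsub. simpl. unfold plus, opp; simpl. ring.
Qed.

Lemma feval_mul a b : wbounded r a -> wbounded r b -> feval t (fmul a b) = feval t a * feval t b.
Proof.
  intros Ha Hb. apply is_series_unique.
  eapply is_series_ext;
    [| exact (is_series_mult _ _ _ _ (is_series_feval a Ha) (is_series_feval b Hb)
                (ex_series_Rabs_feval a Ha) (ex_series_Rabs_feval b Hb))].
  intro n. unfold fmul. rewrite Rmult_comm, scal_sum. apply sum_eq. intros k Hk.
  replace (t ^ n) with (t ^ k * t ^ (n - k)) by (rewrite <- pow_add; f_equal; lia).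
  ring.
Qed.

Lemma feval_pow a k : wbounded r a -> feval t (fpow a k) = feval t a ^ k.
Proof.
  intro Ha. induction k as [| k IHk]; simpl; [apply feval_const |].
  rewrite feval_mul, IHk by (try apply wbounded_pow; auto). reflexivity.
Qed.

Ltac wbounded_tac :=
  repeat first [ assumption | apply wbounded_const | apply wbounded_fX | apply wbounded_sub
               | apply wbounded_add | apply wbounded_mul | apply wbounded_pow ].

Ltac feval_push H :=
  repeat first [ rewrite feval_pow in H by wbounded_tac
               | rewrite feval_mul in H by wbounded_tac
               | rewrite feval_add in H by wbounded_tac
               | rewrite feval_sub in H by wbounded_tac
               | rewrite feval_const in H | rewrite feval_fX in H ].

Lemma feval_Z_eqn z : wbounded r z -> Z_eqn z ->
  feval t z * (1 + feval t z ^ 2) = t * (1 + feval t z) ^ 4.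
Proof. intros Hz [_ E]. apply (f_equal (feval t)) in E. feval_push E. exact E. Qed.

Lemma feval_mu_eqn u z m : wbounded r z -> wbounded r m -> mu_eqn u z m ->
  let Z := feval t z in let mu := feval t m in
  mu * ((1 + Z) * ((1 + Z + Z ^ 2) * ((1 - Z) ^ 3 * (1 - mu * Z ^ 2)))) =
    (u - 1) * ((1 + Z ^ 2) * ((1 + mu * Z) * ((1 + mu * Z ^ 2) * (1 + mu * Z ^ 3)))).
Proof.
  intros Hz Hm E Z mu. unfold mu_eqn in E. cbv zeta in E.
  apply (f_equal (feval t)) in E. feval_push E. exact E.
Qed.

End Evaluation.

Lemma wnorm_z_le r z : 0 < r <= 1 / 100 -> Z_eqn z -> forall K, wnorm r K z <= 2 * r.
Proof.
  intros Hr [Hz0 E]. assert (Hr0 : 0 <= r) by lra.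
  assert (HW0 : fadd (fconst 1) (fpow z 2) 0%nat = 1)
    by (unfold fadd; rewrite fpow_0, Hz0; simpl; ring).
  induction K as [| K IHK]; [unfold wnorm; simpl; rewrite Hz0, Rabs_R0; lra |].
  set (n := wnorm r K z) in IHK. assert (Hn0 : 0 <= n) by now apply wnorm_ge0.
  eapply Rle_trans; [apply (wnorm_S_of_fmul_eq r Hr0 K _ _ _ HW0 E) |].
  rewrite wnorm_fX_mul.
  assert (H1 : wnorm r K (fpow (fadd (fconst 1) z) 4) <= (1 + 1 / 50) ^ 4).
  { apply wnorm_pow_le; [exact Hr0 |]. apply wnorm_one_add_le; [exact Hr0 | fold n; lra]. }
  assert (H2 : wnorm r (S K) (fmul z (fnonconst (fadd (fconst 1) (fpow z 2)))) <= n * n ^ 2).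
  { eapply Rle_trans; [apply wnorm_mul_S; auto |].
    apply Rmult_le_compat_l; [exact Hn0 |].
    rewrite wnorm_nonconst, HW0, Rabs_R1 by exact Hr0.
    assert (wnorm r K (fadd (fconst 1) (fpow z 2)) <= 1 + n ^ 2).
    { apply wnorm_one_add_le; [exact Hr0 |]. apply wnorm_pow_le; [exact Hr0 | apply Rle_refl]. }
    lra. }
  assert (r * wnorm r K (fpow (fadd (fconst 1) z) 4) <= r * (11 / 10))
    by (apply Rmult_le_compat_l; simpl in H1 |- *; lra).
  assert (Hn2 : n ^ 2 <= 1 / 2500) by (simpl; nra).
  assert (n * n ^ 2 <= n / 2500) by nra.
  lra.
Qed.

Definition mu_denom (z m : fps) : fps :=
  let one := fconst 1 in
  fmul (fadd one z) (fmul (fadd (fadd one z) (fpow z 2))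
    (fmul (fpow (fsub one z) 3) (fsub one (fmul m (fpow z 2))))).

Definition mu_numer (u : R) (z m : fps) : fps :=
  let one := fconst 1 in
  fmul (fconst (u - 1)) (fmul (fadd one (fpow z 2))
    (fmul (fadd one (fmul m z))
      (fmul (fadd one (fmul m (fpow z 2))) (fadd one (fmul m (fpow z 3)))))).

Section MuRecursionStep.

Variables (u r : R) (z m : fps) (K : nat).
Hypothesis r_ge0 : 0 <= r.
Hypothesis r_small : 2 * r <= 1 / 100.
Hypothesis z0 : z 0%nat = 0.
Hypothesis wnorm_z : wnorm r (S K) z <= 2 * r.
Hypothesis wnorm_m : wnorm r K m * (2 * r) <= 1 / 100.

Lemma wnorm_S_fpow_z_le j : (1 <= j)%nat -> wnorm r (S K) (fpow z j) <= 2 * r.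
Proof.
  intros Hj. destruct j as [| j]; [lia |].
  apply Rle_trans with ((2 * r) ^ S j); [now apply wnorm_pow_le |].
  assert ((2 * r) ^ j <= 1) by (rewrite <- (pow1 j); apply pow_incr; lra).
  simpl. nra.
Qed.

Lemma fpow_z_0 j : (1 <= j)%nat -> fpow z j 0%nat = 0.
Proof. intro Hj. rewrite fpow_0, z0. destruct j; [lia | simpl; ring]. Qed.

Lemma wnorm_S_fmul_m_le b : b 0%nat = 0 -> wnorm r (S K) b <= 2 * r ->
  wnorm r (S K) (fmul m b) <= 1 / 100.
Proof.
  intros Hb0 Hb. eapply Rle_trans; [now apply wnorm_mul_S_l |].
  pose proof (wnorm_ge0 r r_ge0 K m). pose proof (wnorm_ge0 r r_ge0 (S K) b). nra.
Qed.

Lemma wnorm_S_fmul_m_fpow_z_le j : (1 <= j)%nat ->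
  wnorm r (S K) (fmul m (fpow z j)) <= 1 / 100.
Proof.
  intro Hj. apply wnorm_S_fmul_m_le; [now apply fpow_z_0 | now apply wnorm_S_fpow_z_le].
Qed.

Lemma wnorm_mu_numer_le : wnorm r (S K) (mu_numer u z m)
  <= Rabs (u - 1) * ((1 + 1 / 100) * ((1 + 1 / 100) * ((1 + 1 / 100) * (1 + 1 / 100)))).
Proof.
  pose proof (wnorm_S_fpow_z_le 2 ltac:(lia)).
  unfold mu_numer.
  apply wnorm_mul_le; [exact r_ge0 | rewrite wnorm_const; lra |].
  apply wnorm_mul_le; [exact r_ge0 | apply wnorm_one_add_le; [exact r_ge0 | lra] |].
  apply wnorm_mul_le; [exact r_ge0 | |].
  { apply wnorm_one_add_le; [exact r_ge0 | now apply wnorm_S_fmul_m_le]. }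
  apply wnorm_mul_le; [exact r_ge0 | |];
    (apply wnorm_one_add_le; [exact r_ge0 | apply wnorm_S_fmul_m_fpow_z_le; lia]).
Qed.

Lemma wnorm_mu_denom_le : wnorm r (S K) (mu_denom z m)
  <= (1 + 1 / 100) * ((1 + 1 / 100 + 1 / 100) * ((1 + 1 / 100) ^ 3 * (1 + 1 / 100))).
Proof.
  pose proof (wnorm_S_fpow_z_le 2 ltac:(lia)).
  unfold mu_denom.
  apply wnorm_mul_le; [exact r_ge0 | apply wnorm_one_add_le; [exact r_ge0 | lra] |].
  apply wnorm_mul_le; [exact r_ge0 | |].
  { apply wnorm_add_le; [exact r_ge0 | apply wnorm_one_add_le; [exact r_ge0 | lra] | lra]. }
  apply wnorm_mul_le; [exact r_ge0 | |].
  - apply wnorm_pow_le; [exact r_ge0 |]. apply wnorm_one_sub_le; [exact r_ge0 | lra].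
  - apply wnorm_one_sub_le; [exact r_ge0 |]. apply wnorm_S_fmul_m_fpow_z_le; lia.
Qed.

End MuRecursionStep.

Lemma wnorm_m_le u r z m : 0 < r -> 2 * r * (2 * Rabs (u - 1) + 1) <= 1 / 100 ->
  Z_eqn z -> mu_eqn u z m -> forall K, wnorm r K m <= 2 * Rabs (u - 1) + 1.
Proof.
  intros Hr HrM Hz Hm K. pose proof Hz as [Hz0 _].
  assert (Hmu : fmul m (mu_denom z m) = mu_numer u z m) by exact Hm.
  pose proof (Rabs_pos (u - 1)) as Hu.
  assert (Hr0 : 0 <= r) by lra.
  assert (Hr1 : 2 * r <= 1 / 100) by nra.
  assert (HW0 : mu_denom z m 0%nat = 1)
    by (unfold mu_denom, fadd, fsub, fconst; cbn; rewrite Hz0; ring).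
  induction K as [| K IHK].
  { unfold wnorm. simpl. rewrite (coef_of_fmul_eq m _ _ HW0 Hmu 0).
    unfold mu_numer, fnonconst, fadd, fconst; cbn. rewrite Hz0.
    replace (_ - _) with (u - 1) by ring. lra. }
  pose proof (wnorm_z_le r z ltac:(lra) Hz (S K)) as Hz1.
  pose proof (wnorm_ge0 r Hr0 K m) as Hm0.
  assert (Hmr : wnorm r K m * (2 * r) <= 1 / 100) by nra.
  pose proof (wnorm_mu_numer_le u r z m K Hr0 Hr1 Hz0 Hz1 Hmr) as HR.
  pose proof (wnorm_mu_denom_le r z m K Hr0 Hr1 Hz0 Hz1 Hmr) as HW.
  eapply Rle_trans; [apply (wnorm_S_of_fmul_eq r Hr0 K _ _ _ HW0 Hmu) |].
  assert (wnorm r (S K) (fmul m (fnonconst (mu_denom z m))) <= wnorm r K m * (8 / 100)).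
  { eapply Rle_trans; [apply wnorm_mul_S_l; [exact Hr0 | reflexivity] |].
    apply Rmult_le_compat_l; [exact Hm0 |].
    rewrite wnorm_nonconst, HW0, Rabs_R1 by exact Hr0. simpl in HW. lra. }
  lra.
Qed.

Lemma cos_3a x : cos (3 * x) = 4 * cos x ^ 3 - 3 * cos x.
Proof.
  replace (3 * x) with (2 * x + x) by ring.
  rewrite cos_plus, cos_2a, sin_2a.
  pose proof (sin2 x) as Hsin; unfold Rsqr in Hsin.
  replace (2 * sin x * cos x * sin x) with (2 * cos x * (sin x * sin x)) by ring.
  rewrite Hsin; ring.
Qed.

Lemma Rpower_3_2 A : 0 < A -> Rpower A (3 / 2) = A * sqrt A.
Proof.
  intro HA. replace (3 / 2) with (1 + / 2) by field.
  rewrite Rpower_plus, Rpower_1, Rpower_sqrt; lra.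
Qed.

Lemma cos_acos_div3_ge Q : 1 / 2 <= cos (acos Q / 3).
Proof.
  rewrite <- cos_PI3.
  pose proof (acos_bound Q). pose proof PI_RGT_0.
  apply cos_decr_1; lra.
Qed.

Lemma viete_cubic_root A N : 0 < A -> Rabs N <= A * sqrt A ->
  let y := 2 / 3 * sqrt A * cos (acos (N / (A * sqrt A)) / 3) in
  y ^ 3 - A / 3 * y - 2 * N / 27 = 0.
Proof.
  intros HA HN y.
  assert (HsA : 0 < sqrt A) by now apply sqrt_lt_R0.
  assert (HsA2 : sqrt A * sqrt A = A) by (apply sqrt_sqrt; lra).
  assert (HAsA : 0 < A * sqrt A) by nra.
  set (Q := N / (A * sqrt A)) in y.
  assert (HQ : -1 <= Q <= 1).
  { apply Rabs_le_between in HN. unfold Q.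
    split; apply Rmult_le_reg_r with (A * sqrt A); try field_simplify; lra. }
  set (c := cos (acos Q / 3)) in y.
  assert (Hc : 4 * c ^ 3 - 3 * c = Q).
  { unfold c. rewrite <- cos_3a. replace (3 * (acos Q / 3)) with (acos Q) by field.
    now apply cos_acos. }
  transitivity (2 / 27 * (A * sqrt A) * (4 * c ^ 3 - 3 * c) - 2 * N / 27).
  { unfold y. set (sA := sqrt A) in *. rewrite <- HsA2. field. }
  rewrite Hc. unfold Q. field. lra.
Qed.

Lemma depressed_cubic_root_unique p q y1 y2 :
  y1 ^ 3 - p * y1 - q = 0 -> y2 ^ 3 - p * y2 - q = 0 ->
  p < y1 ^ 2 + y1 * y2 + y2 ^ 2 -> y1 = y2.
Proof.
  intros H1 H2 Hp.
  assert (Hf : (y1 - y2) * (y1 ^ 2 + y1 * y2 + y2 ^ 2 - p) = 0).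
  { rewrite <- (Rminus_diag_eq _ _ (eq_trans H1 (eq_sym H2))). ring. }
  apply Rmult_integral in Hf as [Hf | Hf]; lra.
Qed.

Lemma mu_eqn_scaled u Z mu :
  (1 + Z) * (1 + Z + Z ^ 2) * (1 - Z) ^ 3 <> 0 ->
  mu * ((1 + Z) * ((1 + Z + Z ^ 2) * ((1 - Z) ^ 3 * (1 - mu * Z ^ 2)))) =
    (u - 1) * ((1 + Z ^ 2) * ((1 + mu * Z) * ((1 + mu * Z ^ 2) * (1 + mu * Z ^ 3)))) ->
  let s := mu * Z ^ 2 in
  s * (1 - s) = v_of u Z * (Z + s) * (1 + s) * (1 + s * Z).
Proof.
  intros HD E s. unfold s, v_of.
  set (D := (1 + Z) * (1 + Z + Z ^ 2) * (1 - Z) ^ 3) in *.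
  transitivity
    (Z ^ 2 * (mu * ((1 + Z) * ((1 + Z + Z ^ 2) * ((1 - Z) ^ 3 * (1 - mu * Z ^ 2))))) / D).
  { replace (Z ^ 2 * (mu * ((1 + Z) * ((1 + Z + Z ^ 2) * ((1 - Z) ^ 3 * (1 - mu * Z ^ 2))))))
      with (mu * Z ^ 2 * (1 - mu * Z ^ 2) * D) by (unfold D; ring).
    field. exact HD. }
  rewrite E. field. exact HD.
Qed.

(* x = 2/(1+s) solves x^3 - (3+b) x^2 + (2+2b) x + 4 v Z = 0 with b = v (1-Z)^2;
   y is x shifted to remove the quadratic term. *)
Lemma depressed_cubic_of_scaled v Z s : 1 + s <> 0 ->
  s * (1 - s) = v * (Z + s) * (1 + s) * (1 + s * Z) ->
  let y := 2 / (1 + s) - (1 + v * (1 - Z) ^ 2 / 3) in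
  y ^ 3 - (3 + v ^ 2 * (1 - Z) ^ 4) / 3 * y
    - 2 * (- 9 * v * (1 + 4 * Z + Z ^ 2) + v ^ 3 * (1 - Z) ^ 6) / 27 = 0.
Proof.
  intros Hs E y.
  apply (Rmult_eq_reg_r ((1 + s) ^ 3)); [| now apply pow_nonzero].
  rewrite Rmult_0_l.
  transitivity (-4 * (s * (1 - s) - v * (Z + s) * (1 + s) * (1 + s * Z))).
  { unfold y. field. exact Hs. }
  rewrite E. ring.
Qed.

Lemma mu_denominator_ge Z : Rabs Z <= 1 / 100 ->
  9 / 10 <= (1 + Z) * (1 + Z + Z ^ 2) * (1 - Z) ^ 3.
Proof.
  intro HZ. apply Rabs_le_between in HZ.
  replace ((1 + Z) * (1 + Z + Z ^ 2) * (1 - Z) ^ 3)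
    with ((1 - Z ^ 2) * (1 + Z + Z ^ 2) * (1 - Z) ^ 2) by ring.
  assert (H1 : 9 / 10 <= (1 - Z ^ 2) * (1 + Z + Z ^ 2)) by nra.
  assert (H2 : 98 / 100 <= (1 - Z) ^ 2) by nra.
  nra.
Qed.

Lemma v_of_small u Z : Rabs Z <= 1 / 100 -> Rabs (u - 1) * Rabs Z <= 1 / 200 ->
  Rabs (v_of u Z) <= 1 / 100.
Proof.
  intros HZ Huz.
  pose proof (mu_denominator_ge Z HZ) as HD.
  unfold v_of. rewrite Rabs_div by lra.
  rewrite (Rabs_right ((1 + Z) * _ * _)) by lra.
  apply Rle_div_l; [lra |].
  rewrite !Rabs_mult.
  assert (H1 : Rabs (1 + Z ^ 2) <= 11 / 10)
    by (apply Rabs_le_between in HZ; apply Rabs_le; nra).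
  pose proof (Rabs_pos (u - 1)). pose proof (Rabs_pos Z).
  pose proof (Rabs_pos (1 + Z ^ 2)).
  nra.
Qed.

Lemma Rabs_v_one_sub_sq_le v Z : Rabs Z <= 1 / 100 -> Rabs v <= 1 / 100 ->
  Rabs (v * (1 - Z) ^ 2) <= 1 / 50.
Proof.
  intros HZ Hv. rewrite Rabs_mult, <- RPow_abs.
  assert (Rabs (1 - Z) <= 101 / 100)
    by (apply Rabs_le_between in HZ; apply Rabs_le; lra).
  pose proof (Rabs_pos v). pose proof (Rabs_pos (1 - Z)).
  assert (Rabs (1 - Z) ^ 2 <= 2) by (simpl; nra).
  nra.
Qed.

Lemma depressed_cubic_coeffs_le v Z : Rabs Z <= 1 / 100 -> Rabs v <= 1 / 100 ->
  3 <= 3 + v ^ 2 * (1 - Z) ^ 4 <= 3 + 1 / 1000 /\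
  Rabs (- 9 * v * (1 + 4 * Z + Z ^ 2) + v ^ 3 * (1 - Z) ^ 6) <= 1 / 10.
Proof.
  intros HZ Hv.
  pose proof (Rabs_v_one_sub_sq_le v Z HZ Hv) as Hb.
  apply Rabs_le_between in HZ, Hb.
  assert (0 <= (v * (1 - Z) ^ 2) ^ 2 <= 1 / 2500) by (split; [apply pow2_ge_0 | nra]).
  split.
  { replace (v ^ 2 * (1 - Z) ^ 4) with ((v * (1 - Z) ^ 2) ^ 2) by ring. lra. }
  replace (- 9 * v * (1 + 4 * Z + Z ^ 2) + v ^ 3 * (1 - Z) ^ 6)
    with (v * (- 9 * (1 + 4 * Z + Z ^ 2) + (v * (1 - Z) ^ 2) ^ 2 * (1 - Z) ^ 2)) by ring.
  rewrite Rabs_mult.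
  set (w := - 9 * (1 + 4 * Z + Z ^ 2) + (v * (1 - Z) ^ 2) ^ 2 * (1 - Z) ^ 2).
  assert (Rabs w <= 10).
  { assert (0 <= (1 - Z) ^ 2 <= 2) by (split; [apply pow2_ge_0 | nra]).
    apply Rabs_le. unfold w. split; nra. }
  pose proof (Rabs_pos v). pose proof (Rabs_pos w).
  nra.
Qed.

Lemma mu_eq_mu_closed u Z mu :
  Z <> 0 -> Rabs Z <= 1 / 100 -> Rabs (u - 1) * Rabs Z <= 1 / 200 ->
  Rabs (mu * Z ^ 2) <= 1 / 100 ->
  mu * ((1 + Z) * ((1 + Z + Z ^ 2) * ((1 - Z) ^ 3 * (1 - mu * Z ^ 2)))) =
    (u - 1) * ((1 + Z ^ 2) * ((1 + mu * Z) * ((1 + mu * Z ^ 2) * (1 + mu * Z ^ 3)))) ->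
  mu = mu_closed u Z.
Proof.
  intros HZ0 HZ Huz Hs E.
  pose proof (v_of_small u Z HZ Huz) as Hv.
  pose proof (mu_denominator_ge Z HZ) as HD.
  pose proof (mu_eqn_scaled u Z mu ltac:(lra) E) as Es; cbv zeta in Es.
  pose proof (Rabs_v_one_sub_sq_le _ Z HZ Hv) as Hb.
  pose proof (depressed_cubic_coeffs_le _ Z HZ Hv) as [HA HN].
  set (v := v_of u Z) in *. set (s := mu * Z ^ 2) in *.
  apply Rabs_le_between in HZ, Hs, Hb.
  pose proof (depressed_cubic_of_scaled v Z s ltac:(lra) Es) as Ey; cbv zeta in Ey.
  set (A := 3 + v ^ 2 * (1 - Z) ^ 4) in *.
  set (N := - 9 * v * (1 + 4 * Z + Z ^ 2) + v ^ 3 * (1 - Z) ^ 6) in *.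
  assert (HsA : 1 <= sqrt A <= 9 / 5).
  { rewrite <- sqrt_1, <- (sqrt_pow2 (9 / 5)) by lra.
    split; apply sqrt_le_1_alt; lra. }
  pose proof (viete_cubic_root A N ltac:(lra) ltac:(nra)) as Ev; cbv zeta in Ev.
  set (c := cos (acos (N / (A * sqrt A)) / 3)) in *.
  assert (Hc : 1 / 2 <= c) by apply cos_acos_div3_ge.
  (* Both roots exceed 1/3, so y1^2 + y1 y2 + y2^2 > A/3 and they cannot differ. *)
  assert (Hy : 2 / (1 + s) - (1 + v * (1 - Z) ^ 2 / 3) = 2 / 3 * sqrt A * c).
  { eapply depressed_cubic_root_unique; [exact Ey | exact Ev |].
    assert (2 / (1 + s) >= 2 / (1 + 1 / 100)).
    { apply Rle_ge, Rmult_le_reg_r with ((1 + s) * (1 + 1 / 100)); [nra |].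
      field_simplify; lra. }
    assert (9 / 10 <= 2 / (1 + s) - (1 + v * (1 - Z) ^ 2 / 3)) by lra.
    assert (1 / 3 <= 2 / 3 * sqrt A * c) by nra.
    nra. }
  unfold mu_closed, phi_of. cbv zeta. fold v A N.
  rewrite Rpower_3_2 by lra. fold c. rewrite <- Hy. unfold s in *.
  field. split; [lra | split; [intro H6; ring_simplify in H6; lra | exact HZ0]].
Qed.

Theorem proposition5 :
  forall (u : R) (z m : fps),
    Z_eqn z -> mu_eqn u z m ->
    exists eps : R, 0 < eps /\
      forall t : R, 0 < Rabs t < eps ->
        exists Zt mut : R,
          is_series (fun n => z n * t ^ n) Zt /\
          is_series (fun n => m n * t ^ n) mut /\
          mut = mu_closed u Zt.
Proof.
  intros u z m Hz Hm.
  pose proof (Rabs_pos (u - 1)) as Hu.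
  set (r := 1 / (200 * (2 * Rabs (u - 1) + 1))).
  assert (Hr : 0 < r) by (unfold r; apply Rdiv_lt_0_compat; lra).
  assert (HrM : 2 * r * (2 * Rabs (u - 1) + 1) = 1 / 100) by (unfold r; field; lra).
  exists r. split; [exact Hr |]. intros t [Ht0 Ht].
  pose proof (wnorm_z_le r z ltac:(nra) Hz) as Hzb.
  pose proof (wnorm_m_le u r z m Hr ltac:(lra) Hz Hm) as Hmb.
  assert (Hzw : wbounded r z) by (eexists; exact Hzb).
  assert (Hmw : wbounded r m) by (eexists; exact Hmb).
  exists (feval t z), (feval t m).
  split; [now apply (is_series_feval r) |].
  split; [now apply (is_series_feval r) |].
  pose proof (Rabs_feval_le r t Ht z _ Hzb) as HZ.
  pose proof (Rabs_feval_le r t Ht m _ Hmb) as Hmu.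
  pose proof (feval_Z_eqn r t Ht z Hzw Hz) as EZ.
  pose proof (feval_mu_eqn r t Ht u z m Hzw Hmw Hm) as Emu; cbv zeta in Emu.
  set (Zt := feval t z) in *. set (mut := feval t m) in *.
  apply mu_eq_mu_closed; [| nra | | | exact Emu].
  - intro HZ0. rewrite HZ0 in EZ. assert (t = 0) by nra. subst t. rewrite Rabs_R0 in Ht0. lra.
  - pose proof (Rabs_pos Zt). nra.
  - rewrite Rabs_mult, <- RPow_abs. pose proof (Rabs_pos Zt). pose proof (Rabs_pos mut).
    assert (Rabs mut * Rabs Zt <= 1 / 100) by nra.
    replace (Rabs mut * Rabs Zt ^ 2) with (Rabs mut * Rabs Zt * Rabs Zt) by ring.
    nra.
Qed.
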